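(* Let $k\ge 2$ be an integer and let $G_k$ be a connected triangle-free graph with chromatic number $k$, with vertices $v_1,\dots,v_n$. Let $H_k=G_k\boxtimes K_2$ be the graph obtained from $G_k$ by replacing each vertex $v_i$ by two adjacent vertices $x_i,y_i$ and each edge $v_iv_j$ of $G_k$ by a copy of $K_4$ on $\{x_i,y_i,x_j,y_j\}$ (and no other edges). Then: (i) $W^-(H_k,K_3)=2$; (ii) for every integer $s\ge k$, the $K_3$-WORM colorings of $H_k$ using $s$ colors in which $x_1$ and $y_1$ receive the same color are in one-to-one correspondence with the proper vertex colorings of $G_k$ using $s$ colors (namely, in each such coloring every pair $\{x_i,y_i\}$ is monochromatic, and giving $v_i$ the color of $\{x_i,y_i\}$ yields the correspondence); (iii) if $k\ge 4$ and $3\le t\le k-1$, then $H_k$ admits no $K_3$-WORM coloring using exactly $t$ colors.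
   Context: A $K_3$-WORM coloring of a graph $G$ is an assignment of colors to the vertices of $G$ such that no triangle ($K_3$-subgraph) of $G$ is monochromatic or rainbow; equivalently, the three vertices of every triangle receive exactly two distinct colors. For a graph $G$ admitting such a coloring, $W^-(G,K_3)$ denotes the minimum number of colors used in a $K_3$-WORM coloring of $G$. *)

From mathcomp Require Import all_boot.
Set Implicit Arguments. Unset Strict Implicit. Unset Printing Implicit Defensive.

Definition simple_graph (V : finType) (e : rel V) : Prop :=
  symmetric e /\ irreflexive e.

Definition connected_graph (V : finType) (e : rel V) : Prop :=
  forall u v : V, connect e u v.

Definition triangle_free (V : finType) (e : rel V) : Prop :=
  forall u v w : V, ~ [&& e u v, e v w & e u w].

Definition proper_coloring (V : finType) (C : Type) (e : rel V) (f : V -> C) : Prop :=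
  forall u v : V, e u v -> f u <> f v.

Definition chromatic_number_eq (V : finType) (e : rel V) (k : nat) : Prop :=
  (exists f : V -> 'I_k, proper_coloring e f) /\
  (forall j, j < k -> ~ exists f : V -> 'I_j, proper_coloring e f).

(* strong product G ⊠ K_2: vertex v_i becomes (v_i,false) = x_i, (v_i,true) = y_i *)
Definition strongK2 (V : finType) (e : rel V) : rel (V * bool) :=
  fun p q => ((p.1 == q.1) && (p.2 != q.2)) || e p.1 q.1.

Definition K3_worm (T : finType) (C : eqType) (e : rel T) (c : T -> C) : Prop :=
  forall x y z : T, e x y -> e y z -> e x z ->
    ((c x == c y) || (c y == c z) || (c x == c z)) /\
    ~ ((c x == c y) && (c y == c z)).

Definition ncolors (T : finType) (c : T -> nat) : nat :=
  size (undup [seq c x | x <- enum T]).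

Definition Wminus_K3_eq (T : finType) (e : rel T) (m : nat) : Prop :=
  (exists c : T -> nat, K3_worm e c /\ ncolors c = m) /\
  (forall c : T -> nat, K3_worm e c -> m <= ncolors c).

(* In every triangle of G ⊠ K_2 containing a pair {x_v, y_v}, the third vertex
   is a twin pair of a neighbour w of v; so a K_3-WORM colouring either makes
   some pair {x_v, y_v} monochromatic, in which case the WORM condition along
   the edges of the connected graph G forces all pairs to be monochromatic with
   distinct colours at adjacent vertices (a proper colouring of G), or makes
   every pair bichromatic, in which case every pair carries the same two
   colours.  Hence the colourings use either exactly 2 colours or at least
   chi(G) = k colours. *)

From mathcomp Require Import all_boot zify.
Set Implicit Arguments. Unset Strict Implicit.

Definition two_valued (C : eqType) (a b c : C) : bool :=
  ((a == b) || (b == c) || (a == c)) && ~~ ((a == b) && (b == c)).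

Lemma two_valued_swap12 (C : eqType) (a b c : C) :
  two_valued a b c = two_valued b a c.
Proof.
rewrite /two_valued (eq_sym b a); case: (a =P b) => [->|_] //=.
by rewrite orbC.
Qed.

Lemma two_valued_swap23 (C : eqType) (a b c : C) :
  two_valued a b c = two_valued a c b.
Proof.
rewrite /two_valued (eq_sym c b); case: (b =P c) => [->|_] /=.
  by rewrite andbC orbC.
by rewrite andbF orbF andbT; case: (a == b); case: (a == c).
Qed.

Lemma two_valued_aa (C : eqType) (a c : C) : two_valued a a c = (a != c).
Proof. by rewrite /two_valued eqxx /=; case: (a == c). Qed.

Lemma two_valued_neq (C : eqType) (a b c : C) :
  a != b -> two_valued a b c -> (c == a) || (c == b).
Proof.
move=> neq_ab; rewrite /two_valued (negbTE neq_ab) /= => /andP[/orP[] eq_c _].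
  by rewrite (eq_sym c b) eq_c orbT.
by rewrite (eq_sym c a) eq_c.
Qed.

Lemma K3_wormE (T : finType) (C : eqType) (e : rel T) (c : T -> C) :
  K3_worm e c <->
  forall x y z, e x y -> e y z -> e x z -> two_valued (c x) (c y) (c z).
Proof.
split=> worm x y z exy eyz exz; have := worm x y z exy eyz exz.
  by case=> some_eq /negP not_all_eq; rewrite /two_valued some_eq not_all_eq.
by case/andP=> some_eq /negP.
Qed.

Lemma connect_transport (V : finType) (e : rel V) (P : V -> Prop) :
  (forall u v, e u v -> P u -> P v) -> forall u v, connect e u v -> P u -> P v.
Proof.
move=> stepP u v /connectP[p]; elim: p u => [|w p IHp] u /=; first by move=> _ ->.
by case/andP=> euw pw last_v Pu; apply: (IHp w pw last_v); apply: stepP euw Pu.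
Qed.

Lemma ncolors_ge2 (T : finType) (c : T -> nat) x y :
  c x != c y -> 2 <= ncolors c.
Proof.
move=> neq_xy; rewrite /ncolors -[2]/(size [:: c x; c y]).
apply: uniq_leq_size; first by rewrite /= inE neq_xy.
by move=> z; rewrite !inE => /orP[] /eqP ->; rewrite mem_undup map_f ?mem_enum.
Qed.

Lemma ncolors_le (T : finType) (c : T -> nat) (s : seq nat) :
  (forall x, c x \in s) -> ncolors c <= size s.
Proof.
move=> cs; apply: uniq_leq_size; first exact: undup_uniq.
by move=> z; rewrite mem_undup => /mapP[x _ ->].
Qed.

Lemma ncolors_ordinal (T : finType) (c : T -> nat) :
  exists g : T -> 'I_(ncolors c), forall x y, g x = g y -> c x = c y.
Proof.
set L := undup [seq c x | x <- enum T].
have cL x : c x \in L by rewrite mem_undup map_f ?mem_enum.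
have ltL x : index (c x) L < ncolors c by rewrite index_mem.
exists (fun x => Ordinal (ltL x)) => x y [] eq_index.
by rewrite -(nth_index 0 (cL x)) eq_index nth_index.
Qed.

Section StrongProductWorm.

Variables (V : finType) (e : rel V).
Hypotheses (e_simple : simple_graph e) (e_triangle_free : triangle_free e).

Lemma strongK2_triangle (x y z : V * bool) :
  strongK2 e x y -> strongK2 e y z -> strongK2 e x z ->
  [\/ [/\ x.1 = y.1, x.2 != y.2 & e x.1 z.1],
      [/\ y.1 = z.1, y.2 != z.2 & e y.1 x.1] |
      [/\ x.1 = z.1, x.2 != z.2 & e x.1 y.1]].
Proof.
have [e_sym e_irr] := e_simple.
case: x y z => [x1 x2] [y1 y2] [z1 z2]; rewrite /strongK2 /=.
move=> /orP[/andP[/eqP exy nxy] | exy] /orP[/andP[/eqP eyz nyz] | eyz]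
       /orP[/andP[/eqP exz nxz] | exz].
- by move: nxy nyz nxz; case: x2; case: y2; case: z2.
- by subst; rewrite e_irr in exz.
- by subst; rewrite e_irr in eyz.
- by constructor 1.
- by subst; rewrite e_irr in exy.
- by constructor 2; rewrite e_sym.
- by constructor 3.
- by case: (@e_triangle_free x1 y1 z1); rewrite exy eyz exz.
Qed.

Lemma strongK2_wormP (C : eqType) (c : V * bool -> C) :
  K3_worm (strongK2 e) c <->
  forall u w b, e u w -> two_valued (c (u, false)) (c (u, true)) (c (w, b)).
Proof.
split=> [/K3_wormE worm u w b euw | pair_worm].
  by apply: worm; rewrite /strongK2 /= ?eqxx ?euw ?orbT.
have twin_worm (p q r : V * bool) : p.1 = q.1 -> p.2 != q.2 -> e p.1 r.1 ->
    two_valued (c p) (c q) (c r).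
  case: p q r => [p1 [|]] [q1 [|]] [r1 r2] /= <- //= _ epr.
    by rewrite two_valued_swap12; apply: pair_worm.
  exact: pair_worm.
apply/K3_wormE => x y z exy eyz exz.
case: (strongK2_triangle exy eyz exz) => -[eq1 neq2 adj].
- exact: twin_worm.
- by rewrite two_valued_swap12 two_valued_swap23; apply: twin_worm.
- by rewrite two_valued_swap23; apply: twin_worm.
Qed.

Variables (C : eqType) (c : V * bool -> C).
Hypothesis c_worm : K3_worm (strongK2 e) c.

Lemma worm_mono_edge u v : e u v -> c (u, false) = c (u, true) ->
  c (v, false) = c (v, true) /\ c (u, false) <> c (v, false).
Proof.
have [e_sym _] := e_simple.
move=> euv mono_u; have /strongK2_wormP worm := c_worm.
have := worm _ _ false euv; have := worm _ _ true euv.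
rewrite -mono_u !two_valued_aa => neq_uvT neq_uvF.
split; last exact/eqP.
have := worm _ _ false (etrans (e_sym v u) euv).
rewrite /two_valued ![c (v, _) == c (u, _)]eq_sym (negbTE neq_uvF) (negbTE neq_uvT).
by rewrite !orbF => /andP[/eqP].
Qed.

Hypothesis e_connected : connected_graph e.

Lemma worm_mono_all v1 : c (v1, false) = c (v1, true) ->
  forall v, c (v, false) = c (v, true).
Proof.
move=> mono_v1 v.
apply: (connect_transport (P := fun v => c (v, false) = c (v, true)))
  (e_connected v1 v) mono_v1.
by move=> u w euw mono_u; case: (worm_mono_edge euw mono_u).
Qed.

Lemma worm_mono_proper v1 : c (v1, false) = c (v1, true) ->
  proper_coloring e (fun v => c (v, false)).
Proof.
by move=> mono_v1 u v euv; case: (worm_mono_edge euv (worm_mono_all mono_v1 u)).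
Qed.

(* With no monochromatic pair, the colours of each pair {x_w, y_w} lie among
   those of the neighbouring pair, so connectivity propagates the pair of u0. *)
Lemma worm_bichromatic_pairs u0 :
  (forall v, c (v, false) != c (v, true)) ->
  forall v b, c (v, b) = c (u0, false) \/ c (v, b) = c (u0, true).
Proof.
move=> bichrom.
pose same_pair v := c (v, false) = c (u0, false) /\ c (v, true) = c (u0, true)
                 \/ c (v, false) = c (u0, true) /\ c (v, true) = c (u0, false).
suff pair_u0 v : same_pair v by move=> v [|]; case: (pair_u0 v) => -[eqF eqT]; rewrite ?eqF ?eqT; tauto.
apply: (connect_transport (P := same_pair)) (e_connected u0 v) _; last by left.
move=> u w euw pair_u; have /strongK2_wormP worm := c_worm.
case/orP: (two_valued_neq (bichrom u) (worm _ _ false euw)) => /eqP wF;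
case/orP: (two_valued_neq (bichrom u) (worm _ _ true euw)) => /eqP wT;
move: (bichrom w) pair_u; rewrite /same_pair wF wT ?eqxx //; tauto.
Qed.

End StrongProductWorm.

Section StrongProductColorings.

Variables (V : finType) (e : rel V).
Hypotheses (e_simple : simple_graph e) (e_triangle_free : triangle_free e).

Lemma proper_coloring_worm (C : eqType) (f : V -> C) :
  proper_coloring e f -> K3_worm (strongK2 e) (fun p => f p.1).
Proof.
move=> f_proper; apply/strongK2_wormP => // u w b euw /=.
by rewrite two_valued_aa; apply/eqP/f_proper.
Qed.

Lemma strongK2_worm_2colors : K3_worm (strongK2 e) (fun p => nat_of_bool p.2).
Proof. by apply/strongK2_wormP => // u w [|]. Qed.

Lemma strongK2_worm_ge2 u w (c : V * bool -> nat) :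
  e u w -> K3_worm (strongK2 e) c -> 2 <= ncolors c.
Proof.
move=> euw /(strongK2_wormP e_simple e_triangle_free) worm.
have /andP[_] := worm u w false euw.
by rewrite negb_and => /orP[]; apply: ncolors_ge2.
Qed.

Hypothesis e_connected : connected_graph e.

Lemma strongK2_worm_ncolors u0 w0 (c : V * bool -> nat) :
  e u0 w0 -> K3_worm (strongK2 e) c ->
  ncolors c <= 2 \/ exists f : V -> 'I_(ncolors c), proper_coloring e f.
Proof.
move=> euw0 c_worm.
have [/existsP[v /eqP mono_v] | /existsPn bichrom] :=
  boolP [exists v, c (v, false) == c (v, true)].
  right; have [g gP] := ncolors_ordinal c.
  exists (fun v => g (v, false)) => a b eab /gP.
  exact: worm_mono_proper mono_v a b eab.
left; apply: (ncolors_le (s := [:: c (u0, false); c (u0, true)])) => -[v b].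
by rewrite !inE; case: (worm_bichromatic_pairs e_simple e_triangle_free c_worm
  e_connected u0 bichrom v b) => ->; rewrite eqxx ?orbT.
Qed.

End StrongProductColorings.

Lemma chromatic_has_edge (V : finType) (e : rel V) k :
  2 <= k -> chromatic_number_eq e k -> exists u w, e u w.
Proof.
move=> k2 [_ no_fewer].
have [/existsP[u /existsP[w euw]] | /existsPn no_edge] :=
  boolP [exists u, exists w, e u w]; first by exists u, w.
case: (no_fewer 1 k2); exists (fun _ => ord0) => u v euv.
by have /existsPn/(_ v) := no_edge u; rewrite euv.
Qed.

Theorem mainTheorem2 (k : nat) (V : finType) (e : rel V) :
  2 <= k ->
  simple_graph e -> connected_graph e -> triangle_free e ->
  chromatic_number_eq e k ->
  (* (i) *)
  Wminus_K3_eq (strongK2 e) 2 /\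
  (* (ii) *)
  (forall (s : nat) (v1 : V), k <= s ->
     (forall c : V * bool -> 'I_s,
        K3_worm (strongK2 e) c -> c (v1, false) = c (v1, true) ->
        (forall v, c (v, false) = c (v, true)) /\
        proper_coloring e (fun v => c (v, false))) /\
     (forall f : V -> 'I_s, proper_coloring e f ->
        exists c : V * bool -> 'I_s,
          [/\ K3_worm (strongK2 e) c, c (v1, false) = c (v1, true) &
              forall v b, c (v, b) = f v])) /\
  (* (iii) *)
  (4 <= k -> forall t, 3 <= t <= k - 1 ->
     ~ exists c : V * bool -> nat, K3_worm (strongK2 e) c /\ ncolors c = t).
Proof.
move=> k2 e_simple e_conn e_tf e_chi.
have [u0 [w0 euw0]] := chromatic_has_edge k2 e_chi.
split; [split | split].
- exists (fun p => nat_of_bool p.2); split; first exact: strongK2_worm_2colors.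
  apply/eqP; rewrite eqn_leq (strongK2_worm_ge2 e_simple e_tf euw0) ?andbT;
    last exact: strongK2_worm_2colors.
  by apply: (ncolors_le (s := [:: 0; 1])) => -[x []].
- by move=> c; apply: strongK2_worm_ge2 euw0.
- move=> s v1 _; split=> [c c_worm mono_v1 | f f_proper].
    split=> [v | ]; first exact: (worm_mono_all e_simple e_tf c_worm e_conn mono_v1 v).
    exact: (worm_mono_proper e_simple e_tf c_worm e_conn mono_v1).
  by exists (fun p => f p.1); split=> //; apply: proper_coloring_worm.
- move=> k4 t /andP[t3 tk] [c [c_worm nc_t]].
  have [|[f f_proper]] := strongK2_worm_ncolors e_simple e_tf e_conn euw0 c_worm.
    lia.
  by apply: e_chi.2 (ncolors c) _ _; [lia | exists f].
Qed.
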